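(* Let $\Bbbk$ be an algebraically closed field and let $A=\Bbbk Q/I$ be a selfinjective algebra, where $Q$ is a finite quiver with vertices $1,\dots,r$ and $I\subseteq\Bbbk Q$ is an admissible ideal. Then for every $1\le i\le r$ there is an arrow in $\widetilde Q^+$ ending at vertex $i$.
   Context: $DA=\operatorname{Hom}_\Bbbk(A,\Bbbk)$ with its natural $A$-bimodule structure, and $T(A)=A\ltimes DA$ is the trivial extension, the vector space $A\oplus DA$ with multiplication $(a,f)(b,g)=(ab,ag+fb)$. Let $e_1,\dots,e_r$ be the primitive idempotents of $A$ corresponding to the vertices of $Q$, $A^{\mathrm e}=A\otimes_\Bbbk A^{\mathrm{op}}$, and $\operatorname{soc}_{A^{\mathrm e}}A$ the socle of $A$ as an $A$-bimodule. The quiver $\widetilde Q$ of $T(A)$ has the same vertices as $Q$ and its arrow set is $Q_1\cup\widetilde Q^+$, where $Q_1$ is the arrow set of $Q$ and $\widetilde Q^+$ is the set of new arrows, corresponding to the summand $D(\operatorname{soc}_{A^{\mathrm e}}A)$ of $\operatorname{rad}T(A)/\operatorname{rad}^2T(A)\cong\mathfrak r/\mathfrak r^2\oplus D(\operatorname{soc}_{A^{\mathrm e}}A)$ ($\mathfrak r$ the radical of $A$): the number of arrows of $\widetilde Q^+$ from vertex $i$ to vertex $j$ equals $\dim_\Bbbk e_j D(\operatorname{soc}_{A^{\mathrm e}}A) e_i$. *)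

From HB Require Import structures.
From mathcomp Require Import all_boot all_order all_algebra all_field.
From Stdlib Require Import ClassicalEpsilon.
Set Implicit Arguments. Unset Strict Implicit. Unset Printing Implicit Defensive.
Import GRing.Theory.
Local Open Scope ring_scope.

Section Defs.
Variables (F : fieldType) (A : falgType F).

Definition is_lmod_action (V : vectType F) (act : A -> V -> V) : Prop :=
  [/\ forall a (c : F) u v, act a (c *: u + v) = c *: act a u + act a v,
      forall (c : F) a b u, act (c *: a + b) u = c *: act a u + act b u,
      forall u, act 1 u = u
    & forall a b u, act (a * b) u = act a (act b u)].

Definition is_lmod_hom (V W : vectType F) (actV : A -> V -> V)
  (actW : A -> W -> W) (f : 'Hom(V, W)) : Prop :=
  forall a v, f (actV a v) = actW a (f v).

Definition injective_lmod (E : vectType F) (actE : A -> E -> E) : Prop :=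
  forall (M N : vectType F) (actM : A -> M -> M) (actN : A -> N -> N),
    is_lmod_action actM -> is_lmod_action actN ->
    forall (i : 'Hom(M, N)), is_lmod_hom actM actN i -> lker i = 0%VS ->
    forall (f : 'Hom(M, E)), is_lmod_hom actM actE f ->
    exists g : 'Hom(N, E), is_lmod_hom actN actE g /\ forall m, g (i m) = f m.

Definition selfinjective : Prop := injective_lmod (fun a (x : A) => a * x).

Section Presentation.
Variables (r : nat) (Q1 : finType) (s t : Q1 -> 'I_r).
(* e v : image of the trivial path at v;  alpha x : image of the arrow x : s x -> t x *)
Variables (e : 'I_r -> A) (alpha : Q1 -> A).

Definition word_img (w : seq Q1) : A := \prod_(x <- w) alpha x.

(* x lies in the image of R^n, R the arrow ideal of kQ *)
Definition in_arrow_pow (n : nat) (x : A) : Prop :=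
  exists ws : seq (seq Q1),
    all (fun w => n <= size w)%N ws /\ x \in <<map word_img ws>>%VS.

(* The algebra morphism kQ -> A, (trivial path at v) |-> e v, (arrow x) |-> alpha x,
   is well defined, surjective, and its kernel I satisfies R^m ⊆ I ⊆ R^2. *)
Definition admissible_presentation : Prop :=
  (* relations of kQ are respected *)
  (forall v w, e v * e w = (if v == w then e v else 0)) /\
  (\sum_(v < r) e v = 1) /\
  (forall x, alpha x = e (t x) * alpha x * e (s x)) /\
  (forall y : A, exists ws : seq (seq Q1),
      y \in <<[seq e v | v <- enum 'I_r] ++ map word_img ws>>%VS) /\
  (* R^m ⊆ I for some m >= 2 *)
  (exists m, (2 <= m)%N /\ forall w, (m <= size w)%N -> word_img w = 0) /\
  (* I ⊆ R^2 *)
  (forall (c : 'I_r -> F) (d : Q1 -> F),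
      in_arrow_pow 2 (\sum_(v < r) c v *: e v + \sum_(x : Q1) d x *: alpha x) ->
      (forall v, c v = 0) /\ (forall x, d x = 0)).
End Presentation.

Definition sub_bimod (U : {vspace A}) : Prop :=
  forall a u, u \in U -> (a * u \in U) /\ (u * a \in U).

Definition simple_sub_bimod (U : {vspace A}) : Prop :=
  [/\ sub_bimod U, U != 0%VS &
      forall W, sub_bimod W -> (W <= U)%VS -> W = 0%VS \/ W = U].

Definition is_bimod_socle (S : {vspace A}) : Prop :=
  (exists Us : seq {vspace A},
      (forall U, U \in Us -> simple_sub_bimod U) /\ S = (\sum_(U <- Us) U)%VS)
  /\ (forall U, simple_sub_bimod U -> (U <= S)%VS).

Definition bimod_socle : {vspace A} := epsilon (inhabits 0%VS) is_bimod_socle.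

Definition dual_sp (S : {vspace A}) := 'Hom(subvs_of S, F^o).

Definition dual_act (S : {vspace A}) (a b : A) (f : dual_sp S) : dual_sp S :=
  linfun (fun m : subvs_of S => f (vsproj S (b * vsval m * a))).

Definition dual_corner (S : {vspace A}) (a b : A) : {vspace dual_sp S} :=
  limg (linfun (fun f : dual_sp S => dual_act a b f)).

(* number of arrows of Q~^+ from vertex j to vertex i:
   dim_k  e_i D(soc_{A^e} A) e_j *)
Definition num_new_arrows (r : nat) (e : 'I_r -> A) (j i : 'I_r) : nat :=
  \dim (dual_corner bimod_socle (e i) (e j)).

End Defs.

From HB Require Import structures.
From mathcomp Require Import all_boot all_order all_algebra all_field.
From Stdlib Require Import ClassicalEpsilon.
Set Implicit Arguments. Unset Strict Implicit. Unset Printing Implicit Defensive.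
Import GRing.Theory.
Local Open Scope ring_scope.

(* If no nonzero x in A e_i were killed on the right by all arrows,
   the arrows together with 1 - e_i would have zero left annihilator; selfinjectivity
   then makes them generate A as a right ideal, and multiplying by e_i on the left
   puts e_i into the ideal generated by the arrows, which is impossible because
   I lies in R^2. Multiplying such an x on the left by a longest path not killing it
   (paths of length m vanish) and then by a suitable e_j yields z != 0 with
   e_j z e_i = z annihilated by the arrows on both sides. The line k z is then a
   simple sub-bimodule, hence lies in the bimodule socle, and a functional that does
   not vanish at z gives a nonzero element of e_i D(soc A) e_j. *)

Lemma span_ind (K : fieldType) (V : vectType K) (P : V -> Prop) (X : seq V) :
  P 0 -> (forall x y, P x -> P y -> P (x + y)) -> (forall (c : K) x, P x -> P (c *: x)) ->
  (forall x, x \in X -> P x) -> forall v, v \in <<X>>%VS -> P v.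
Proof.
move=> P0 PD PZ; elim: X => [|x X IH] PX v.
  by rewrite span_nil memv0 => /eqP ->.
rewrite span_cons => /memv_addP [y /vlineP [c ->] [z Xz ->]].
apply: PD; first by apply: PZ; apply: PX; rewrite mem_head.
by apply: IH => // u Xu; apply: PX; rewrite in_cons Xu orbT.
Qed.

Lemma linfunE (K : fieldType) (U V : vectType K) (f : U -> V) :
  (forall (c : K) x y, f (c *: x + y) = c *: f x + f y) -> forall x, linfun f x = f x.
Proof.
move=> f_lin x.
pose L : {linear U -> V} := HB.pack f (GRing.isLinear.Build K U V *:%R f f_lin).
exact: (lfunE L x).
Qed.

Lemma classic_ex_maxn (P : nat -> Prop) (b : nat) :
  P 0%N -> (forall n, P n -> (n <= b)%N) ->
  exists n, P n /\ forall k, P k -> (k <= n)%N.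
Proof.
move=> P0 Pb; pose p n : bool := excluded_middle_informative (P n).
have pP n : reflect (P n) (p n) by apply: sumboolP.
have p0 : exists n, p n by exists 0%N; apply/pP.
have pb n : p n -> (n <= b)%N by move/pP; apply: Pb.
by case: (ex_maxnP p0 pb) => n /pP Pn max_n; exists n; split=> // k /pP; apply: max_n.
Qed.

Section Bimodules.
Variables (F : fieldType) (A : falgType F).

Lemma mulr_lmod_action : is_lmod_action (fun a (x : A) => a * x).
Proof.
split=> [a c u v|c a b u|u|a b u]; first by rewrite mulrDr scalerAr.
- by rewrite mulrDl scalerAl.
- by rewrite mul1r.
- by rewrite mulrA.
Qed.

Lemma selfinjective_right_ideal (I : finType) (u : I -> A) :
  selfinjective A -> (forall a, (forall i, a * u i = 0) -> a = 0) ->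
  forall b : A, exists c : I -> A, b = \sum_i u i * c i.
Proof.
move=> injA lann0 b.
pose actN (a : A) (n : {ffun I -> A}) := [ffun i => a * n i].
have actN_lmod : is_lmod_action actN.
  split=> [a c n n'|c a a' n|n|a a' n]; apply/ffunP => i; rewrite !ffunE.
  - by rewrite mulrDr scalerAr.
  - by rewrite mulrDl scalerAl.
  - by rewrite mul1r.
  - by rewrite mulrA.
pose iota (a : A) := [ffun i => a * u i].
have iota_lin (c : F) a a' : iota (c *: a + a') = c *: iota a + iota a'.
  by apply/ffunP => i; rewrite !ffunE mulrDl scalerAl.
have iota_hom : is_lmod_hom (fun a (x : A) => a * x) actN (linfun iota).
  by move=> a x; rewrite !linfunE //; apply/ffunP => i; rewrite !ffunE mulrA.
have iota_inj : lker (linfun iota) = 0%VS.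
  apply/eqP; rewrite -subv0; apply/subvP => a; rewrite memv_ker linfunE // memv0.
  move=> /eqP /ffunP iota_a0; apply/eqP/lann0 => i.
  by have := iota_a0 i; rewrite !ffunE.
have mulb_lin (c : F) a a' : (c *: a + a') * b = c *: (a * b) + a' * b.
  by rewrite mulrDl scalerAl.
have mulb_hom : is_lmod_hom (fun a (x : A) => a * x) (fun a (x : A) => a * x)
    (linfun (fun a => a * b)).
  by move=> a x; rewrite !linfunE // mulrA.
have [g [g_hom g_iota]] :=
  injA _ _ _ _ mulr_lmod_action actN_lmod _ iota_hom iota_inj _ mulb_hom.
exists (fun i => g [ffun j => (j == i)%:R]).
have iota1 : linfun iota 1 = \sum_i actN (u i) [ffun j => (j == i)%:R].
  apply/ffunP => j; rewrite linfunE // sum_ffunE (bigD1 j) //= big1 => [|i ij].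
    by rewrite !ffunE eqxx mulr1 mul1r addr0.
  by rewrite !ffunE eq_sym (negbTE ij) mulr0.
have := g_iota 1; rewrite [RHS]linfunE // mul1r iota1 linear_sum => <-.
by apply: eq_bigr => i _; apply: g_hom.
Qed.

Lemma simple_sub_bimod_line (z : A) :
  z != 0 -> sub_bimod <[z]>%VS -> simple_sub_bimod <[z]>%VS.
Proof.
move=> nz sz; split=> //; first by rewrite -dimv_eq0 dim_vline nz.
move=> W _ sWz; have [->|nW] := eqVneq W 0%VS; [by left | right].
by apply/eqP; rewrite eqEdim sWz dim_vline nz lt0n dimv_eq0.
Qed.

Lemma exists_bimod_socle : exists S : {vspace A}, is_bimod_socle S.
Proof.
pose P n := exists Us : seq {vspace A},
  (forall U, U \in Us -> simple_sub_bimod U) /\ \dim (\sum_(U <- Us) U)%VS = n.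
have P0 : P 0%N by exists [::]; rewrite big_nil dimv0.
have Pdim n : P n -> (n <= \dim (fullv : {vspace A}))%N.
  by move=> [Us [_ <-]]; apply/dimvS/subvf.
have [n [[Us [simple_Us <-]] max_n]] := classic_ex_maxn P0 Pdim.
exists (\sum_(U <- Us) U)%VS; split; first by exists Us.
move=> U simple_U; suff -> : (\sum_(U <- Us) U)%VS = (U + \sum_(U <- Us) U)%VS.
  exact: addvSl.
apply/eqP; rewrite eqEdim addvSr max_n //.
exists (U :: Us); rewrite big_cons; split=> // V.
by rewrite in_cons => /orP [/eqP ->|/simple_Us].
Qed.

Lemma simple_sub_bimod_socle (U : {vspace A}) :
  simple_sub_bimod U -> (U <= bimod_socle A)%VS.
Proof.
have [S socS] := exists_bimod_socle.
have [_] : is_bimod_socle (bimod_socle A) by apply: epsilon_spec; exists S.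
exact.
Qed.

Lemma dual_actE (S : {vspace A}) a b (f : dual_sp S) m :
  dual_act a b f m = f (vsproj S (b * vsval m * a)).
Proof.
rewrite /dual_act linfunE // => c m1 m2.
by rewrite !linearP /= mulrDr mulrDl -scalerAr -scalerAl !linearP.
Qed.

Lemma dual_corner_neq0 (S : {vspace A}) (z a b : A) :
  z \in S -> z != 0 -> b * z * a = z -> (0 < \dim (dual_corner S a b))%N.
Proof.
move=> zS nz bza; set v := vsproj S z.
have nv : v != 0 by apply: contraNneq nz => v0; rewrite -(vsprojK zS) -/v v0 linear0.
have /existsP [k nk] : [exists k, coord (vbasis fullv) k v != 0].
  apply: contraR nv => /existsPn ck0; rewrite (coord_vbasis (memvf v)) big1 // => k _.
  by move/negPn/eqP: (ck0 k) => ->; rewrite scale0r.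
pose f : dual_sp S := linfun (coord (vbasis fullv) k : subvs_of S -> F^o).
have fv : f v != 0 by rewrite lfunE.
have Lf : linfun (dual_act a b) f = dual_act a b f.
  rewrite linfunE // => c g h; apply/lfunP => m.
  by rewrite add_lfunE scale_lfunE !dual_actE add_lfunE scale_lfunE.
rewrite lt0n dimv_eq0; apply: contraNneq fv => corner0.
have : dual_act a b f \in dual_corner S a b by rewrite -Lf memv_img ?memvf.
rewrite corner0 memv0 => /eqP /lfunP /(_ v).
by rewrite dual_actE zero_lfunE /v vsprojK // bza => /eqP.
Qed.

End Bimodules.

Section Presentation.
Variables (F : fieldType) (A : falgType F) (r : nat) (Q1 : finType)
  (s t : Q1 -> 'I_r) (e : 'I_r -> A) (alpha : Q1 -> A).

Lemma word_img_cons y w : word_img alpha (y :: w) = alpha y * word_img alpha w.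
Proof. by rewrite /word_img big_cons. Qed.

Lemma word_img_rcons y w : word_img alpha (rcons w y) = word_img alpha w * alpha y.
Proof. by rewrite /word_img -cats1 big_cat /= big_seq1. Qed.

Lemma in_arrow_pow0 n : in_arrow_pow alpha n 0.
Proof. by exists [::]; rewrite mem0v. Qed.

Lemma in_arrow_powD n x y :
  in_arrow_pow alpha n x -> in_arrow_pow alpha n y -> in_arrow_pow alpha n (x + y).
Proof.
move=> [ws [long_ws x_ws]] [ws' [long_ws' y_ws']]; exists (ws ++ ws').
by rewrite all_cat long_ws long_ws' map_cat span_cat memv_add.
Qed.

Lemma in_arrow_powZ n (c : F) x : in_arrow_pow alpha n x -> in_arrow_pow alpha n (c *: x).
Proof. by move=> [ws [long_ws x_ws]]; exists ws; rewrite memvZ. Qed.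

Lemma in_arrow_pow_sum n (I : finType) (G : I -> A) :
  (forall i, in_arrow_pow alpha n (G i)) -> in_arrow_pow alpha n (\sum_i G i).
Proof.
move=> G_pow; apply: (big_ind (in_arrow_pow alpha n)) => //.
  exact: in_arrow_pow0.
exact: in_arrow_powD.
Qed.

Hypothesis e_mul : forall v w, e v * e w = (if v == w then e v else 0).
Hypothesis e_sum : \sum_(v < r) e v = 1.
Hypothesis alpha_corner : forall y, alpha y = e (t y) * alpha y * e (s y).
Hypothesis paths_span : forall a : A, exists ws : seq (seq Q1),
  a \in <<[seq e v | v <- enum 'I_r] ++ map (word_img alpha) ws>>%VS.
Variable m : nat.
Hypothesis long_words_vanish : forall w, (m <= size w)%N -> word_img alpha w = 0.
Hypothesis relations_in_rad2 : forall (c : 'I_r -> F) (d : Q1 -> F),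
  in_arrow_pow alpha 2 (\sum_(v < r) c v *: e v + \sum_(y : Q1) d y *: alpha y) ->
  (forall v, c v = 0) /\ (forall y, d y = 0).

Lemma e_idem v : e v * e v = e v.
Proof. by rewrite e_mul eqxx. Qed.

Lemma mul_e_arrow v y : e v * alpha y = if t y == v then alpha y else 0.
Proof.
rewrite alpha_corner !mulrA e_mul eq_sym.
by case: eqP => [->|_]; rewrite -?alpha_corner ?mul0r.
Qed.

Lemma mul_arrow_e v y : alpha y * e v = if s y == v then alpha y else 0.
Proof.
rewrite alpha_corner -!mulrA e_mul.
by case: eqP => [->|_]; rewrite ?mulrA -?alpha_corner ?mulr0.
Qed.

Lemma arrow_mul_mod_rad2 y (c : A) :
  exists l : F, in_arrow_pow alpha 2 (alpha y * c - l *: alpha y).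
Proof.
have [ws c_ws] := paths_span c; move: c c_ws; apply: span_ind.
- by exists 0; rewrite mulr0 scale0r subr0; apply: in_arrow_pow0.
- move=> a b [la a_la] [lb b_lb]; exists (la + lb).
  have -> : alpha y * (a + b) - (la + lb) *: alpha y =
      (alpha y * a - la *: alpha y) + (alpha y * b - lb *: alpha y).
    by rewrite mulrDr scalerDl opprD addrACA.
  exact: in_arrow_powD.
- move=> c a [la a_la]; exists (c * la).
  by rewrite -scalerAr -scalerA -scalerBr; apply: in_arrow_powZ.
- move=> a; rewrite mem_cat => /orP [/mapP [v _ ->]|/mapP [[|y' w] _ ->]].
  + rewrite mul_arrow_e; exists (s y == v)%:R.
    by case: eqP => _; rewrite ?scale1r ?scale0r subrr; apply: in_arrow_pow0.
  + by exists 1; rewrite /word_img big_nil mulr1 scale1r subrr; apply: in_arrow_pow0.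
  + exists 0; rewrite scale0r subr0 -word_img_cons.
    by exists [:: [:: y, y' & w]]; split=> //; apply: memv_span; rewrite mem_head.
Qed.

Lemma e_notin_arrow_ideal i (c : Q1 -> A) : e i <> \sum_y alpha y * c y.
Proof.
move=> ei.
have [l l_rad2] := fin_all_exists (fun y => arrow_mul_mod_rad2 y (c y)).
have [] := @relations_in_rad2 (fun v => (v == i)%:R) (fun y => - l y).
  have -> : \sum_(v < r) (v == i)%:R *: e v = e i.
    rewrite (bigD1 i) //= eqxx scale1r big1 ?addr0 // => v /negbTE ->.
    by rewrite scale0r.
  rewrite ei -big_split /=; apply: in_arrow_pow_sum => y.
  by rewrite scaleNr; apply: l_rad2.
by move=> /(_ i) /eqP; rewrite eqxx oner_eq0.
Qed.

Lemma exists_right_annihilated i : selfinjective A ->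
  exists x, [/\ x != 0, x * e i = x & forall y, x * alpha y = 0].
Proof.
move=> injA; apply: NNPP => no_x.
pose u (o : Q1 + unit) := if o is inl y then alpha y else 1 - e i.
have lann0 a : (forall o, a * u o = 0) -> a = 0.
  move=> a_u; apply: NNPP => /eqP na; apply: no_x; exists a; split=> // [|y].
    by have /eqP := a_u (inr tt); rewrite mulrBr mulr1 subr_eq0 eq_sym => /eqP.
  exact: a_u (inl y).
have [c ec] := selfinjective_right_ideal injA lann0 (e i).
apply: (@e_notin_arrow_ideal i (fun y => if t y == i then c (inl y) else 0)).
rewrite -[LHS]e_idem {2}ec mulr_sumr big_sumType /= [X in _ + X]big1 ?addr0.
  by apply: eq_bigr => y _; rewrite mulrA mul_e_arrow; case: eqP; rewrite ?mul0r ?mulr0.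
by move=> o _; rewrite mulrA mulrBr mulr1 e_idem subrr mul0r.
Qed.

Lemma exists_left_annihilated_path x : x != 0 ->
  exists w, word_img alpha w * x != 0 /\ forall y, alpha y * (word_img alpha w * x) = 0.
Proof.
move=> nx; pose P n := exists w, size w = n /\ word_img alpha w * x != 0.
have P0 : P 0%N by exists [::]; rewrite /word_img big_nil mul1r.
have Pm n : P n -> (n <= m)%N.
  move=> [w [<- nwx]]; rewrite leqNgt; apply: contra nwx => /ltnW /long_words_vanish ->.
  by rewrite mul0r.
have [n [[w [sw nwx]] max_n]] := classic_ex_maxn P0 Pm.
exists w; split=> // y; apply: NNPP => /eqP nywx.
have /max_n : P n.+1 by exists (y :: w); rewrite /= sw word_img_cons -mulrA.
by rewrite ltnn.
Qed.

Lemma exists_vertex_component x : x != 0 -> exists j, e j * x != 0.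
Proof.
move=> nx; apply: NNPP => no_j; move: nx.
rewrite -[x]mul1r -e_sum mulr_suml big1 ?eqxx // => j _.
by apply: NNPP => /eqP nj; apply: no_j; exists j.
Qed.

Lemma sub_bimod_corner_line i j z :
  e j * z = z -> z * e i = z ->
  (forall y, alpha y * z = 0) -> (forall y, z * alpha y = 0) -> sub_bimod <[z]>%VS.
Proof.
move=> ez ze az za.
have e_z v : e v * z = if v == j then z else 0.
  by rewrite -{1}ez mulrA e_mul; case: eqP => [->|_]; rewrite ?ez ?mul0r.
have z_e v : z * e v = if i == v then z else 0.
  by rewrite -{1}ze -mulrA e_mul; case: eqP; rewrite ?ze ?mulr0.
have line_mul a : a * z \in <[z]>%VS /\ z * a \in <[z]>%VS.
  have [ws a_ws] := paths_span a; move: a a_ws; apply: span_ind.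
  - by rewrite mul0r mulr0 mem0v.
  - by move=> a b [az_z za_z] [bz_z zb_z]; rewrite mulrDl mulrDr !memvD.
  - by move=> c a [az_z za_z]; rewrite -scalerAl -scalerAr !memvZ.
  - move=> a; rewrite mem_cat => /orP [/mapP [v _ ->]|/mapP [w _ ->]].
      by rewrite e_z z_e; split; case: eqP; rewrite ?memv_line ?mem0v.
    split.
      case/lastP: w => [|w y]; first by rewrite /word_img big_nil mul1r memv_line.
      by rewrite word_img_rcons -mulrA az mulr0 mem0v.
    case: w => [|y w]; first by rewrite /word_img big_nil mulr1 memv_line.
    by rewrite word_img_cons mulrA za mul0r mem0v.
move=> a _ /vlineP [c ->]; rewrite -scalerAr -scalerAl.
by have [az_z za_z] := line_mul a; rewrite !memvZ.
Qed.

End Presentation.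

Theorem proposition3p3 (k : closedFieldType) (A : falgType k)
  (r : nat) (Q1 : finType) (s t : Q1 -> 'I_r) (e : 'I_r -> A) (alpha : Q1 -> A) :
  admissible_presentation s t e alpha ->
  selfinjective A ->
  forall i : 'I_r, exists j : 'I_r, (0 < num_new_arrows e j i)%N.
Proof.
move=> [e_mul [e_sum [alpha_corner [paths_span [[m [_ long0]] rad2]]]]] injA i.
have [x [nx x_ei x_alpha]] :=
  exists_right_annihilated e_mul alpha_corner paths_span rad2 i injA.
have [w [nwx alpha_wx]] := exists_left_annihilated_path long0 nx.
have [j nz] := exists_vertex_component e_sum nwx.
set z := e j * (word_img alpha w * x) in nz.
have ez : e j * z = z by rewrite /z mulrA (e_idem e_mul).
have ze : z * e i = z by rewrite /z -!mulrA x_ei.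
have az y : alpha y * z = 0.
  by rewrite /z mulrA (mul_arrow_e e_mul alpha_corner); case: eqP; rewrite ?alpha_wx ?mul0r.
have za y : z * alpha y = 0 by rewrite /z -!mulrA x_alpha !mulr0.
have z_soc : z \in bimod_socle A.
  apply: subvP (memv_line z); apply/simple_sub_bimod_socle/simple_sub_bimod_line => //.
  exact: sub_bimod_corner_line ez ze az za.
by exists j; apply: dual_corner_neq0 z_soc nz _; rewrite ez ze.
Qed.
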